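(* For every integer $m\ge1$, every $k\ge1$ and all integers $n_1,\dots,n_k$ (of arbitrary signs), $$M\big(\mathcal G(m,n_1)\,\mathcal G(m,n_2)\cdots\mathcal G(m,n_k)\big)=M\big(\mathcal G(m,n_1+n_2+\cdots+n_k)\big).$$
   Context: Grid conventions: an $m$-by-$N$ grid has vertices $(i,j)$, $1\le i\le m$ (rows), $1\le j\le N$ (columns); horizontal edges join $(i,j),(i,j+1)$, vertical edges join $(i,j),(i+1,j)$. A signed graph is a graph each of whose edges carries a sign $+1$ or $-1$ (parallel edges allowed). For a signed graph $\mathcal G$, $M(\mathcal G)$ denotes the sum over all perfect matchings of $\mathcal G$ of the product of the signs of the edges in the matching (the empty graph has $M=1$). For $m\ge1$ and $n\ge 1$, $\mathcal G(m,n)$ is the $m$-by-$n$ grid graph with all edges of sign $+1$. For $n\le 0$, $\mathcal G(m,n)$ has the vertex set of the $m$-by-$(2-n)$ grid, all horizontal edges of that grid with sign $+1$, the vertical edges lying in columns $2,3,\dots,1-n$ with sign $-1$, and no vertical edges in columns $1$ and $2-n$. A signed graph of width $m$ is a signed graph whose vertex set is that of an $m$-by-$N$ grid for some $N\ge1$ and whose edges are edges of that grid. For signed graphs $\mathcal G_1,\mathcal G_2$ of width $m$ (with $N_1$ and $N_2$ columns), the adjoined graph $\mathcal G_1\mathcal G_2$ is the signed graph of width $m$ with $N_1+N_2$ columns obtained by placing $\mathcal G_1$ to the left of $\mathcal G_2$ and joining, for each row $i$, the rightmost vertex of row $i$ of $\mathcal G_1$ to the leftmost vertex of row $i$ of $\mathcal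 G_2$ by an edge of sign $+1$. Adjunction is associative. *)

From HB Require Import structures.
From mathcomp Require Import all_boot all_order all_algebra.
Set Implicit Arguments. Unset Strict Implicit. Unset Printing Implicit Defensive.
Import Order.TTheory GRing.Theory Num.Theory.
Local Open Scope ring_scope.

(* Conventions: rows and columns are 0-indexed here: vertex (i,j) with
   i < m, j < N corresponds to the paper's (i+1, j+1).
   A signed graph of width m is encoded by its number of columns and two
   weight functions with values in {-1,0,1}:
   hw i j = sign of the horizontal edge (i,j)--(i,j+1) (0 if absent),
   vw i j = sign of the vertical edge (i,j)--(i+1,j) (0 if absent).
   (The graphs occurring here have no parallel edges.) *)
Record sgraph := SGraph { ncols : nat; hw : nat -> nat -> int; vw : nat -> nat -> int }.

(* Candidate edges of the m-by-N grid: (false,(i,j)) is horizontal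
   (i,j)--(i,j+1), (true,(i,j)) is vertical (i,j)--(i+1,j). *)
Definition gedge (m N : nat) := (bool * ('I_m * 'I_N))%type.

Definition edge_valid (m N : nat) (e : gedge m N) : bool :=
  let: (b, (i, j)) := e in
  if b then (i.+1 < m)%N else (j.+1 < N)%N.

Definition edge_covers (m N : nat) (e : gedge m N) (v : 'I_m * 'I_N) : bool :=
  let: (b, (i, j)) := e in
  ((v.1 : nat) == i) && ((v.2 : nat) == j) ||
  (if b then ((v.1 : nat) == i.+1) && ((v.2 : nat) == j)
        else ((v.1 : nat) == i) && ((v.2 : nat) == j.+1)).

Definition perfect_matching (m N : nat) (S : {set gedge m N}) : bool :=
  [forall e in S, edge_valid e] &&
  [forall v : 'I_m * 'I_N, #|[set e in S | edge_covers e v]| == 1%N].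

Definition edge_weight (m : nat) (G : sgraph) (e : gedge m (ncols G)) : int :=
  let: (b, (i, j)) := e in if b then vw G i j else hw G i j.

(* M(G): sum over perfect matchings of G of the product of signs; perfect
   matchings of the grid using an absent edge (weight 0) contribute 0. *)
Definition Msum (m : nat) (G : sgraph) : int :=
  \sum_(S : {set gedge m (ncols G)} | perfect_matching S)
     \prod_(e in S) edge_weight e.

(* The graph G(m,n) (independent of m in this encoding). *)
Definition Gmn (n : int) : sgraph :=
  if 0 < n then SGraph `|n|%N (fun _ _ => 1) (fun _ _ => 1)
  else SGraph `|2 - n|%N (fun _ _ => 1)
         (fun _ j => if (1 <= j)%N && (j <= `|2 - n|%N - 2)%N then -1 else 0).

(* Adjunction G1 G2 (G1 on the left), with a +1 edge joining the rightmost
   column of G1 to the leftmost column of G2 in each row. *)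
Definition adjoin (G1 G2 : sgraph) : sgraph :=
  SGraph (ncols G1 + ncols G2)
    (fun i j => if (j.+1 < ncols G1)%N then hw G1 i j
                else if j.+1 == ncols G1 then 1
                else hw G2 i (j - ncols G1))
    (fun i j => if (j < ncols G1)%N then vw G1 i j else vw G2 i (j - ncols G1)).

Definition adjoin_all (n0 : int) (ns : seq int) : sgraph :=
  foldl (fun G n => adjoin G (Gmn n)) (Gmn n0) ns.

From mathcomp Require Import all_boot all_order all_algebra.
From mathcomp Require Import zify.
From Stdlib Require Import FunctionalExtensionality.
Import Order.TTheory GRing.Theory Num.Theory.
Set Implicit Arguments. Unset Strict Implicit. Unset Printing Implicit Defensive.
Local Open Scope ring_scope.

(* Cut a grid signed graph between consecutive columns and record, at each
   cut, the set of rows whose horizontal edge crosses it. When all horizontal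
   edges have sign +1, M(G) is the (empty, empty) entry of a product of
   transfer matrices indexed by sets of rows, one per column, and adjunction
   multiplies these products. A column of +1 vertical edges gives a matrix C,
   a column without vertical edges gives the complementation permutation J,
   and a column of -1 vertical edges gives a matrix N, so G(m,n) contributes
   C^n for n > 0 and J N^(-n) J = (J N J)^(-n) for n <= 0.
   The crux is that J N J is the inverse of C. In an entry of C (J N J), the
   middle cut is determined by the vertical edges Y of the second column,
   these are disjoint from the vertical edges of the first column, and the
   union D of both is a matching of a single column; each D is counted with
   the sign sum over its subsets Y, which vanishes unless D is empty. Hence
   G(m,n) contributes C^n for every integer n and the product telescopes. *)

Section FunMatrix.

Variables (T : finType) (R : pzSemiRingType).

Definition fmx := T -> T -> R.
Definition fmx_mul (A B : fmx) : fmx := fun S U => \sum_V A S V * B V U.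
Definition fmx1 : fmx := fun S U => (S == U)%:R.

Fixpoint fmx_pow (A : fmx) (n : nat) : fmx :=
  if n is k.+1 then fmx_mul (fmx_pow A k) A else fmx1.

Lemma fmx_mulA (A B C : fmx) : fmx_mul (fmx_mul A B) C = fmx_mul A (fmx_mul B C).
Proof.
apply: functional_extensionality => S; apply: functional_extensionality => U.
rewrite /fmx_mul; under eq_bigr do rewrite big_distrl /=.
rewrite exchange_big /=; apply: eq_bigr => V _.
by rewrite big_distrr /=; apply: eq_bigr => W _; rewrite mulrA.
Qed.

Lemma fmx_mul1l (A : fmx) : fmx_mul fmx1 A = A.
Proof.
apply: functional_extensionality => S; apply: functional_extensionality => U.
rewrite /fmx_mul /fmx1 (bigD1 S) //= eqxx mul1r big1 ?addr0 // => V.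
by rewrite eq_sym => /negbTE ->; rewrite mul0r.
Qed.

Lemma fmx_mul1r (A : fmx) : fmx_mul A fmx1 = A.
Proof.
apply: functional_extensionality => S; apply: functional_extensionality => U.
rewrite /fmx_mul /fmx1 (bigD1 U) //= eqxx mulr1 big1 ?addr0 // => V.
by move=> /negbTE ->; rewrite mulr0.
Qed.

Lemma fmx_powD (A : fmx) a b :
  fmx_pow A (a + b) = fmx_mul (fmx_pow A a) (fmx_pow A b).
Proof.
elim: b => [|b IH]; first by rewrite addn0 fmx_mul1r.
by rewrite addnS /= IH fmx_mulA.
Qed.

Lemma fmx_powSl (A : fmx) a : fmx_pow A a.+1 = fmx_mul A (fmx_pow A a).
Proof. by rewrite -add1n fmx_powD /= fmx_mul1l. Qed.

Lemma fmx_pow_cancel (A B : fmx) a b : fmx_mul A B = fmx1 ->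
  fmx_mul (fmx_pow A a) (fmx_pow B b) =
  if (b <= a)%N then fmx_pow A (a - b) else fmx_pow B (b - a).
Proof.
move=> AB; elim: b a => [|b IH] a; first by rewrite fmx_mul1r subn0.
case: a => [|a]; first by rewrite fmx_mul1l.
rewrite [fmx_pow B _]fmx_powSl /= fmx_mulA -(fmx_mulA A) AB fmx_mul1l IH.
by rewrite ltnS !subSS.
Qed.

(* A^n for an integer n, B standing for A^-1 (recall that Negz k is -(k+1)). *)
Definition fmx_zpow (A B : fmx) (n : int) : fmx :=
  match n with Posz k => fmx_pow A k | Negz k => fmx_pow B k.+1 end.

Lemma fmx_zpow_pos (A B : fmx) k : fmx_zpow A B (Posz k) = fmx_pow A k.
Proof. by []. Qed.

Lemma fmx_zpow_neg (A B : fmx) k : fmx_zpow A B (Negz k) = fmx_pow B k.+1.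
Proof. by []. Qed.

Lemma fmx_zpowN (A B : fmx) n : fmx_zpow B A (- n) = fmx_zpow A B n.
Proof. by case: n => [[|k]|k]; rewrite // NegzE opprK. Qed.

Lemma fmx_pow_mul_inv (A B : fmx) a b : fmx_mul A B = fmx1 ->
  fmx_mul (fmx_pow A a) (fmx_pow B b) = fmx_zpow A B (Posz a - Posz b).
Proof.
move=> AB; rewrite (fmx_pow_cancel _ _ AB); case: leqP => h.
  by have -> : (Posz a - Posz b = Posz (a - b))%R by lia.
have -> : (Posz a - Posz b = Negz (b - a.+1))%R by rewrite NegzE; lia.
by rewrite fmx_zpow_neg subnSK.
Qed.

Lemma fmx_zpowD (A B : fmx) a b : fmx_mul A B = fmx1 -> fmx_mul B A = fmx1 ->
  fmx_mul (fmx_zpow A B a) (fmx_zpow A B b) = fmx_zpow A B (a + b).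
Proof.
move=> AB BA; case: a => a; case: b => b; rewrite ?fmx_zpow_pos ?fmx_zpow_neg.
- by rewrite -fmx_powD.
- by rewrite fmx_pow_mul_inv // NegzE.
- by rewrite fmx_pow_mul_inv // -fmx_zpowN NegzE; congr fmx_zpow; lia.
- rewrite -fmx_powD addnS addSn -(fmx_zpow_neg A).
  by congr fmx_zpow; rewrite !NegzE; lia.
Qed.

Lemma fmx_pow_conj (J A : fmx) k : fmx_mul J J = fmx1 ->
  fmx_mul J (fmx_mul (fmx_pow A k) J) = fmx_pow (fmx_mul J (fmx_mul A J)) k.
Proof.
move=> JJ; elim: k => [|k IH] /=; first by rewrite fmx_mul1l.
by rewrite -IH !fmx_mulA -(fmx_mulA J J) JJ fmx_mul1l.
Qed.

End FunMatrix.

Arguments fmx1 {T R}.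

Lemma sum_subset_sign (T : finType) (D : {set T}) :
  \sum_(Y : {set T} | Y \subset D) (-1) ^+ #|Y| = (D == set0)%:R :> int.
Proof.
have [->|/set0Pn [x xD]] := eqVneq D set0.
  by rewrite (big_pred1 set0) ?cards0 // => Y; rewrite subset0.
pose flip (Y : {set T}) := if x \in Y then Y :\ x else x |: Y.
have flipK : involutive flip.
  move=> Y; rewrite /flip; case xY: (x \in Y); rewrite !inE eqxx /=.
    by rewrite setD1K.
  by rewrite setU1K ?xY.
set s := \sum_(Y | _) _; suff : s = - s by lia.
rewrite {1}/s (reindex_inj (inv_inj flipK)) -sumrN; apply: eq_big => Y.
  rewrite /flip; case: ifP => xY; last by rewrite subUset sub1set xD.
  apply/idP/idP => [sYD|]; last exact/subset_trans/subD1set.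
  by rewrite -(setD1K xY) subUset sub1set xD.
rewrite /flip => _; case: ifP => xY; last by rewrite cardsU1 xY exprS mulN1r.
by rewrite [in RHS](cardsD1 x) xY exprS mulN1r opprK.
Qed.

Lemma sum_andb_eq n (a : 'I_n) (F : 'I_n -> bool) :
  (\sum_(x : 'I_n) (F x && ((a : nat) == x)) : nat)%N = F a.
Proof.
rewrite (bigD1 a) //= eqxx andbT big1 ?addn0 // => x nx.
by rewrite val_eqE eq_sym (negbTE nx) andbF.
Qed.

Lemma prodr_indicator (I : finType) (R : comPzSemiRingType)
    (b : I -> bool) (x : I -> R) :
  \prod_j ((b j)%:R * x j) = [forall j, b j]%:R * \prod_j x j.
Proof.
rewrite big_split /=; congr (_ * _).
have [/forallP bT|/forallPn [j /negbTE bj]] := boolP [forall j, b j].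
  by apply: big1 => j _; rewrite bT.
by rewrite (bigD1 j) //= bj mul0r.
Qed.

(** * Column transfer matrices *)

Section ColumnTransfer.

Variable m : nat.

(* In a column, S and T are the rows whose left, resp. right, horizontal edge
   is used, and Y the rows i whose vertical edge (i, i+1) is used; thus
   [from_above Y i] records the vertical edge (i-1, i). *)
Definition from_above (Y : {set 'I_m}) (i : 'I_m) : nat :=
  \sum_(k in Y) (k.+1 == i :> nat).

Definition matched_row (S T Y : {set 'I_m}) (i : 'I_m) : bool :=
  ((i \in Y) ==> (i.+1 < m)%N) &&
  ((i \in S) + (i \in T) + (i \in Y) + from_above Y i == 1)%N.

Definition col_matching (S T Y : {set 'I_m}) : bool :=
  [forall i, matched_row S T Y i].

Definition colmx (w : nat -> int) : fmx {set 'I_m} int :=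
  fun S T => \sum_(Y | col_matching S T Y) \prod_(i in Y) w i.

Lemma col_matchingC S T Y : col_matching S T Y = col_matching T S Y.
Proof. by apply: eq_forallb => i; rewrite /matched_row (addnC (_ \in S)). Qed.

Lemma colmxC w S T : colmx w S T = colmx w T S.
Proof. by apply: eq_bigl => Y; rewrite col_matchingC. Qed.

Lemma from_above0 i : from_above set0 i = 0%N.
Proof. by rewrite /from_above big_set0. Qed.

Lemma col_matching0 S T : col_matching S T set0 = (T == ~: S).
Proof.
apply/forallP/eqP => [ok|-> i]; last first.
  by rewrite /matched_row in_set0 from_above0 in_setC; case: (i \in S).
apply/setP => i; move: (ok i); rewrite /matched_row in_set0 from_above0 in_setC.
by case: (i \in S); case: (i \in T).
Qed.

Lemma colmx_constE (c : int) S T :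
  colmx (fun _ => c) S T = \sum_Y (col_matching S T Y)%:R * c ^+ #|Y|.
Proof.
rewrite /colmx big_mkcond; apply: eq_bigr => Y _.
by rewrite prodr_const; case: col_matching; rewrite ?mul1r ?mul0r.
Qed.

Lemma colmx0E S T : colmx (fun _ => 0) S T = (T == ~: S)%:R.
Proof.
rewrite colmx_constE (bigD1 set0) //= big1 => [|Y /negbTE nY0].
  by rewrite cards0 expr0 mulr1 addr0 col_matching0.
by rewrite expr0n cards_eq0 nY0 mulr0.
Qed.

Lemma from_above_split (D Y : {set 'I_m}) i : Y \subset D ->
  from_above D i = (from_above (D :\: Y) i + from_above Y i)%N.
Proof.
move=> YD; rewrite /from_above (big_setID Y) /= addnC.
by rewrite (setIidPr YD).
Qed.

Section Inverse.

Variables S R : {set 'I_m}.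

(* In [colmx_inv] below, the cut T between the two columns is forced by the
   vertical edges Y of the second one. *)
Definition middle_cut (Y : {set 'I_m}) : {set 'I_m} :=
  [set i | (i \notin R) || (0 < (i \in Y) + from_above Y i)%N].

Lemma middle_cut_uniq (T Y : {set 'I_m}) :
  col_matching (~: T) (~: R) Y -> T = middle_cut Y.
Proof.
move=> /forallP ok; apply/setP => i; move: (ok i) => /andP [_ /eqP].
rewrite !in_setC inE.
by case: (i \in T); case: (i \in R); case: (i \in Y) => /=; lia.
Qed.

Lemma middle_cut_disjoint (Y1 Y : {set 'I_m}) :
  col_matching S (middle_cut Y) Y1 -> [disjoint Y1 & Y].
Proof.
move=> /forallP ok; apply/pred0P => k /=; apply/negP => /andP [kY1 kY].
move: (ok k) => /andP [_ /eqP].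
have kT : k \in middle_cut Y by rewrite inE kY add1n orbT.
by rewrite kT kY1; lia.
Qed.

Lemma col_matching_split (D Y : {set 'I_m}) : Y \subset D ->
  col_matching S (middle_cut Y) (D :\: Y) &&
  col_matching (~: middle_cut Y) (~: R) Y = col_matching S (~: R) D.
Proof.
move=> YD.
have rowE i : matched_row S (middle_cut Y) (D :\: Y) i &&
              matched_row (~: middle_cut Y) (~: R) Y i = matched_row S (~: R) D i.
  rewrite /matched_row (from_above_split i YD) !in_setC !inE.
  have := subsetP YD i.
  case: (i \in Y); case: (i \in D); case: (i \in S); case: (i \in R);
    case: (i.+1 < m)%N => //= H; try (by have := H isT).
  all: rewrite ?andbT ?andbF ?andTb ?andFb; repeat case: eqP => //=; try lia.
apply/andP/forallP => [[/forallP ok1 /forallP ok2] i|ok].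
  by rewrite -rowE ok1 ok2.
by split; apply/forallP => i; have := ok i; rewrite -rowE => /andP [].
Qed.

Lemma sum_middle_cut (Y1 Y : {set 'I_m}) :
  \sum_T (col_matching S T Y1 && col_matching (~: T) (~: R) Y)%:R =
  (col_matching S (middle_cut Y) Y1 &&
   col_matching (~: middle_cut Y) (~: R) Y)%:R :> int.
Proof.
rewrite (bigD1 (middle_cut Y)) //= big1 ?addr0 // => T /negbTE nT.
case ok: (_ && _) => //; move/andP: ok => [_ /middle_cut_uniq T_cut].
by rewrite T_cut eqxx in nT.
Qed.

Lemma sum_split_matching (Y : {set 'I_m}) :
  \sum_Y1 (col_matching S (middle_cut Y) Y1 &&
           col_matching (~: middle_cut Y) (~: R) Y)%:R =
  \sum_(D : {set 'I_m} | Y \subset D) (col_matching S (~: R) D)%:R :> int.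
Proof.
rewrite (bigID (fun Y1 : {set 'I_m} => [disjoint Y1 & Y])) /=.
rewrite [X in _ + X]big1 ?addr0; last first.
  move=> Y1 /negbTE nY1; case ok: (_ && _) => //.
  by move/andP: ok => [/middle_cut_disjoint]; rewrite nY1.
rewrite (reindex_onto (fun D => D :\: Y) (fun Y1 => Y1 :|: Y)) /=; last first.
  by move=> Y1 /setDidPl dY1; rewrite setDUl setDv setU0.
apply: eq_big => D; last first.
  by move=> /andP [_ /eqP <-]; rewrite col_matching_split ?subsetUr.
rewrite disjoints_subset subsetDr /=.
apply/eqP/idP => [<-|YD]; first exact: subsetUr.
by rewrite setUC -{1}(setIidPr YD) setID.
Qed.

Lemma colmx_inv :
  \sum_T colmx (fun _ => 1) S T * colmx (fun _ => -1) (~: T) (~: R) =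
  (S == R)%:R.
Proof.
have expand T : colmx (fun _ => 1) S T * colmx (fun _ => -1) (~: T) (~: R) =
    \sum_Y1 \sum_Y (col_matching S T Y1 && col_matching (~: T) (~: R) Y)%:R *
                   (-1) ^+ #|Y|.
  rewrite !colmx_constE big_distrl /=; apply: eq_bigr => Y1 _.
  rewrite expr1n mulr1 big_distrr /=; apply: eq_bigr => Y _.
  by case: (col_matching S T Y1); rewrite /= ?mul1r ?mul0r.
rewrite (eq_bigr _ (fun T _ => expand T)) exchange_big /=.
under eq_bigr do rewrite exchange_big /=.
under eq_bigr do under eq_bigr do rewrite -big_distrl sum_middle_cut /=.
rewrite exchange_big /=.
under eq_bigr do rewrite -big_distrl sum_split_matching /= big_distrl /=.
rewrite (exchange_big_dep predT) //=.
under eq_bigr do rewrite -big_distrr /= sum_subset_sign.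
rewrite (bigD1 set0) //= big1 => [|D /negbTE nD0]; last by rewrite nD0 mulr0.
by rewrite eqxx mulr1 addr0 col_matching0 (inj_eq (@setC_inj _)) eq_sym.
Qed.

End Inverse.

End ColumnTransfer.

Section ColumnPowers.

Variable m : nat.

Let mx := fmx {set 'I_m} int.

Definition Cpos : mx := colmx (fun _ => 1).
Definition Czero : mx := colmx (fun _ => 0).
Definition Cneg : mx := colmx (fun _ => -1).
Definition Cinv : mx := fmx_mul Czero (fmx_mul Cneg Czero).

Lemma Czero_mull (X : mx) S T : fmx_mul Czero X S T = X (~: S) T.
Proof.
rewrite /fmx_mul (bigD1 (~: S)) //= big1 => [|U /negbTE nU].
  by rewrite /Czero colmx0E eqxx mul1r addr0.
by rewrite /Czero colmx0E nU mul0r.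
Qed.

Lemma Czero_mulr (X : mx) S T : fmx_mul X Czero S T = X S (~: T).
Proof.
rewrite /fmx_mul (bigD1 (~: T)) //= big1 => [|U /negbTE nU].
  by rewrite /Czero colmx0E setCK eqxx mulr1 addr0.
by rewrite /Czero colmx0E -(inj_eq (@setC_inj _)) setCK eq_sym nU mulr0.
Qed.

Lemma Czero_mulzero : fmx_mul Czero Czero = fmx1.
Proof.
apply: functional_extensionality => S; apply: functional_extensionality => T.
by rewrite Czero_mull /Czero colmx0E setCK /fmx1 eq_sym.
Qed.

Lemma CinvE S T : Cinv S T = Cneg (~: S) (~: T).
Proof. by rewrite /Cinv Czero_mull Czero_mulr. Qed.

Lemma mulCposCinv : fmx_mul Cpos Cinv = fmx1.
Proof.
apply: functional_extensionality => S; apply: functional_extensionality => R.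
by rewrite /fmx_mul /fmx1 -colmx_inv; apply: eq_bigr => T _; rewrite CinvE.
Qed.

Lemma mulCinvCpos : fmx_mul Cinv Cpos = fmx1.
Proof.
apply: functional_extensionality => S; apply: functional_extensionality => R.
rewrite /fmx_mul /fmx1 eq_sym -colmx_inv; apply: eq_bigr => T _.
by rewrite CinvE mulrC colmxC [Cneg _ _]colmxC.
Qed.

End ColumnPowers.

Arguments Cpos : clear implicits.
Arguments Czero : clear implicits.
Arguments Cneg : clear implicits.
Arguments Cinv : clear implicits.

(** * The transfer matrix of a graph *)

Section ColumnProducts.

Variable m : nat.

Fixpoint colprod (c : nat -> nat -> int) (N : nat) : fmx {set 'I_m} int :=
  if N is k.+1 then fmx_mul (colprod c k) (colmx (c k)) else fmx1.

Lemma eq_colprod c c' N : (forall j i, (j < N)%N -> c j i = c' j i) ->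
  colprod c N = colprod c' N.
Proof.
elim: N => [|N IH] eq_c //=.
rewrite IH => [|j i /ltnW]; last exact: eq_c.
by congr (fmx_mul _ (colmx _)); apply: functional_extensionality => i; exact: eq_c.
Qed.

Lemma colprodD c a b :
  colprod c (a + b) = fmx_mul (colprod c a) (colprod (fun j => c (a + j)%N) b).
Proof.
elim: b => [|b IH] /=; first by rewrite addn0 fmx_mul1r.
by rewrite addnS /= IH fmx_mulA.
Qed.

Lemma colprod_const w N : colprod (fun _ => w) N = fmx_pow (colmx w) N.
Proof. by elim: N => //= N ->. Qed.

Definition graph_mx (G : sgraph) := colprod (fun j i => vw G i j) (ncols G).

Lemma graph_mx_adjoin G1 G2 :
  graph_mx (adjoin G1 G2) = fmx_mul (graph_mx G1) (graph_mx G2).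
Proof.
rewrite /graph_mx /= colprodD; congr fmx_mul; apply: eq_colprod => j i lt_j /=.
  by rewrite lt_j.
by rewrite ltnNge leq_addr /= addKn.
Qed.

Definition Cpow (n : int) := fmx_zpow (Cpos m) (Cinv m) n.

Lemma CpowD a b : fmx_mul (Cpow a) (Cpow b) = Cpow (a + b).
Proof. exact: fmx_zpowD (mulCposCinv m) (mulCinvCpos m). Qed.

Lemma graph_mx_Gpos k : graph_mx (Gmn (Posz k.+1)) = Cpow (Posz k.+1).
Proof. by rewrite /graph_mx /Cpow fmx_zpow_pos /Cpos -colprod_const. Qed.

Lemma graph_mx_Gnonpos k : graph_mx (Gmn (- Posz k)) = Cpow (- Posz k).
Proof.
have cols : `|2 - - Posz k|%N = (1 + (k + 1))%N by lia.
rewrite /Cpow fmx_zpowN fmx_zpow_pos /graph_mx /Gmn oppr_gt0 ltz_nat ltn0 /= cols.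
rewrite colprodD colprodD /= !fmx_mul1l.
rewrite (@eq_colprod _ (fun _ _ => -1)) => [|j i lt_jk]; last by rewrite ifT; lia.
rewrite colprod_const ifF; last by lia.
exact: (fmx_pow_conj _ _ (Czero_mulzero m)).
Qed.

Lemma graph_mx_Gmn n : graph_mx (Gmn n) = Cpow n.
Proof.
case: n => [[|k]|k]; first exact: (graph_mx_Gnonpos 0).
  exact: graph_mx_Gpos.
by rewrite NegzE graph_mx_Gnonpos.
Qed.

Lemma graph_mx_adjoin_Gmn G ns :
  graph_mx (foldl (fun G n => adjoin G (Gmn n)) G ns) =
  fmx_mul (graph_mx G) (Cpow (\sum_(n <- ns) n)).
Proof.
elim: ns G => [|n ns IH] G /=; first by rewrite big_nil fmx_mul1r.
by rewrite IH graph_mx_adjoin graph_mx_Gmn fmx_mulA CpowD big_cons.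
Qed.

Lemma graph_mx_adjoin_all n0 ns :
  graph_mx (adjoin_all n0 ns) = graph_mx (Gmn (n0 + \sum_(n <- ns) n)).
Proof. by rewrite graph_mx_adjoin_Gmn !graph_mx_Gmn CpowD. Qed.

End ColumnProducts.

(** * Perfect matchings as sequences of column states *)

Section ColumnStates.

Variable m : nat.

(* The state of column j: the rows whose horizontal edge to column j+1 is used,
   and the rows i whose vertical edge (i, i+1) is used. *)
Definition cstate := ({set 'I_m} * {set 'I_m})%type.

Definition incoming N (h : {ffun 'I_N -> cstate}) (j : nat) : {set 'I_m} :=
  if j is k.+1 then if insub k is Some k' then (h k').1 else set0 else set0.

Lemma incomingS N (h : {ffun 'I_N -> cstate}) (k : 'I_N) :
  incoming h k.+1 = (h k).1.
Proof. by rewrite /= valK. Qed.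

Definition ext_state N (g : {ffun 'I_N -> cstate}) (p : cstate) :
    {ffun 'I_N.+1 -> cstate} :=
  [ffun i => if unlift ord_max i is Some k then g k else p].

Lemma ext_state_lift N (g : {ffun 'I_N -> cstate}) p k :
  ext_state g p (lift ord_max k) = g k.
Proof. by rewrite ffunE liftK. Qed.

Lemma ext_state_max N (g : {ffun 'I_N -> cstate}) p : ext_state g p ord_max = p.
Proof. by rewrite ffunE unlift_none. Qed.

Lemma ext_state_bij N :
  bijective (fun q : {ffun 'I_N -> cstate} * cstate => ext_state q.1 q.2).
Proof.
exists (fun h : {ffun 'I_N.+1 -> cstate} =>
  ([ffun k => h (lift ord_max k)], h ord_max)).
  move=> [g p] /=; rewrite ext_state_max; congr pair.
  by apply/ffunP => k; rewrite ffunE ext_state_lift.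
move=> h; apply/ffunP => i; rewrite ffunE.
by case: (unliftP ord_max i) => [k ->|->] /=; rewrite ?ffunE.
Qed.

Lemma incoming_ext_state N (g : {ffun 'I_N -> cstate}) p j : (j <= N)%N ->
  incoming (ext_state g p) j = incoming g j.
Proof.
case: j => [//|k] lt_kN.
move: (incomingS (ext_state g p) (lift ord_max (Ordinal lt_kN))).
rewrite ext_state_lift -(incomingS g (Ordinal lt_kN)) /= /bump leqNgt lt_kN.
by [].
Qed.

Lemma incoming_ext_state_last N (g : {ffun 'I_N -> cstate}) p :
  incoming (ext_state g p) N.+1 = p.1.
Proof. by rewrite -[N]/(val (@ord_max N)) incomingS ext_state_max. Qed.

Lemma ext_state_widen N (g : {ffun 'I_N -> cstate}) p (j : 'I_N) :
  ext_state g p (widen_ord (leqnSn N) j) = g j.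
Proof.
have -> : widen_ord (leqnSn N) j = lift ord_max j.
  by apply: val_inj; rewrite /= /bump leqNgt ltn_ord.
exact: ext_state_lift.
Qed.

Variable c : nat -> nat -> int.

Definition col_weight (j : nat) (S : {set 'I_m}) (p : cstate) : int :=
  (col_matching S p.1 p.2)%:R * \prod_(i in p.2) c j i.

Definition states_weight N (h : {ffun 'I_N -> cstate}) : int :=
  \prod_(j : 'I_N) col_weight j (incoming h j) (h j).

Lemma states_weight_ext N (g : {ffun 'I_N -> cstate}) p :
  states_weight (ext_state g p) = states_weight g * col_weight N (incoming g N) p.
Proof.
rewrite /states_weight big_ord_recr /= ext_state_max incoming_ext_state //.
congr (_ * _); apply: eq_bigr => j _.
by rewrite ext_state_widen incoming_ext_state // ltnW.
Qed.

Lemma sum_col_weight j S T :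
  \sum_(p : cstate) (p.1 == T)%:R * col_weight j S p = colmx (c j) S T.
Proof.
rewrite -(pair_bigA _ (fun X Y => (X == T)%:R * col_weight j S (X, Y))) /=.
rewrite (bigD1 T) //= [X in _ + X]big1 => [|X /negbTE nX]; last first.
  by apply: big1 => Y _; rewrite nX mul0r.
rewrite addr0 /colmx [RHS]big_mkcond; apply: eq_bigr => Y _.
by rewrite eqxx mul1r /col_weight /=; case: col_matching; rewrite ?mul1r ?mul0r.
Qed.

Lemma sum_states_weight N T :
  \sum_(h : {ffun 'I_N -> cstate}) (incoming h N == T)%:R * states_weight h =
  colprod c N set0 T.
Proof.
elim: N T => [|N IH] T.
  rewrite (big_pred1 [ffun => (set0, set0)]) => [|h]; last first.
    by apply/esym/eqP/ffunP => -[].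
  by rewrite /states_weight big_ord0 mulr1.
rewrite (reindex _ (onW_bij _ (ext_state_bij N))).
rewrite -(pair_bigA _ (fun g p =>
  (incoming (ext_state g p) N.+1 == T)%:R * states_weight (ext_state g p))).
under eq_bigr do under eq_bigr do
  rewrite incoming_ext_state_last states_weight_ext mulrCA.
under eq_bigr do rewrite -big_distrr sum_col_weight.
rewrite [RHS]/= /fmx_mul; under [RHS]eq_bigr do rewrite -IH big_distrl.
rewrite exchange_big /=; apply: eq_bigr => h _.
rewrite (bigD1 (incoming h N)) //= big1 => [|S /negbTE nS]; last first.
  by rewrite eq_sym nS !mul0r.
by rewrite eqxx mul1r addr0 mulrC.
Qed.

End ColumnStates.

Section Matchings.

Variables m N : nat.
Implicit Types (h : {ffun 'I_N -> cstate m}) (S : {set gedge m N}).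

Definition matching_of h : {set gedge m N} :=
  [set e | let: (b, (i, j)) := e in i \in (if b then (h j).2 else (h j).1)].

Lemma matching_of_bij : bijective matching_of.
Proof.
exists (fun S => [ffun j =>
  ([set i | (false, (i, j)) \in S], [set i | (true, (i, j)) \in S])]).
  move=> h; apply/ffunP => j; rewrite ffunE; case E: (h j) => [X Y].
  by congr pair; apply/setP => i; rewrite !inE E.
by move=> S; apply/setP => -[[] [i j]]; rewrite !inE ffunE /= inE.
Qed.

Lemma sum_incoming h (i : 'I_m) (j : 'I_N) :
  (\sum_(j' : 'I_N) ((i \in (h j').1) && ((j : nat) == j'.+1)) : nat)%N =
  (i \in incoming h j).
Proof.
case: j => [[|k] lt_kN] /=; first by rewrite in_set0 big1 // => x _; rewrite andbF.
have lt_k : (k < N)%N by apply: ltnW.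
rewrite (insubT (fun k => k < N)%N lt_k) (bigD1 (Ordinal lt_k)) //= eqxx andbT.
rewrite big1 ?addn0 // => x nx; case: eqP => [[E]|]; last by rewrite andbF.
by case/eqP: nx; apply: val_inj.
Qed.

Lemma vertical_cover_count h (i : 'I_m) (j : 'I_N) :
  (\sum_(i' : 'I_m) \sum_(j' : 'I_N)
     (((true, (i', j')) \in matching_of h) && edge_covers (true, (i', j')) (i, j)
      : nat))%N =
  ((i \in (h j).2) + from_above (h j).2 i)%N.
Proof.
transitivity (\sum_(i' : 'I_m) (((i' \in (h j).2) && ((i : nat) == i')) +
                                 ((i' \in (h j).2) && ((i : nat) == i'.+1))))%N.
  apply: eq_bigr => i' _.
  under eq_bigr => j' _ do rewrite inE /= -andb_orl andbA.
  rewrite (sum_andb_eq j (fun j' =>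
    (i' \in (h j').2) && (((i : nat) == i') || ((i : nat) == i'.+1)))).
  case: (i' \in _) => //=; case: eqP => [->|] /=; last by case: (_ == _).
  by rewrite (_ : (i' == i'.+1 :> nat) = false) //; lia.
rewrite big_split /= (sum_andb_eq i (fun i' => i' \in (h j).2)); congr (_ + _)%N.
rewrite /from_above [RHS]big_mkcond /=; apply: eq_bigr => k _.
by case: (k \in _) => //=; rewrite eq_sym.
Qed.

Lemma horizontal_cover_count h (i : 'I_m) (j : 'I_N) :
  (\sum_(i' : 'I_m) \sum_(j' : 'I_N)
     (((false, (i', j')) \in matching_of h) && edge_covers (false, (i', j')) (i, j)
      : nat))%N =
  ((i \in (h j).1) + (i \in incoming h j))%N.
Proof.
rewrite exchange_big /=.
transitivity (\sum_(j' : 'I_N) (((i \in (h j').1) && ((j : nat) == j')) +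
                                 ((i \in (h j').1) && ((j : nat) == j'.+1))))%N.
  apply: eq_bigr => j' _.
  under eq_bigr => i' _ do rewrite inE /= -andb_orr andbCA andbC.
  rewrite (sum_andb_eq i (fun i' =>
    (i' \in (h j').1) && (((j : nat) == j') || ((j : nat) == j'.+1)))).
  case: (i \in _) => //=; case: eqP => [->|] /=; last by case: (_ == _).
  by rewrite (_ : (j' == j'.+1 :> nat) = false) //; lia.
by rewrite big_split /= (sum_andb_eq j (fun j' => i \in (h j').1)) sum_incoming.
Qed.

Lemma cover_count h (i : 'I_m) (j : 'I_N) :
  #|[set e in matching_of h | edge_covers e (i, j)]| =
  ((i \in incoming h j) + (i \in (h j).1) + (i \in (h j).2) +
   from_above (h j).2 i)%N.
Proof.
pose cov b (ij : 'I_m * 'I_N) : nat :=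
  ((b, ij) \in matching_of h) && edge_covers (b, ij) (i, j).
rewrite -sum1_card big_mkcond (eq_bigr (fun e => cov e.1 e.2)); last first.
  by move=> [b ij] _; rewrite inE /cov /=; case: (_ && _).
rewrite -pair_bigA /= big_bool /=.
rewrite (eq_bigr (fun e => cov true (e.1, e.2))) => [|[] //].
rewrite [X in (_ + X)%N](eq_bigr (fun e => cov false (e.1, e.2))) => [|[] //].
rewrite -(pair_bigA _ (fun i' j' => cov true (i', j'))).
rewrite -(pair_bigA _ (fun i' j' => cov false (i', j'))).
rewrite vertical_cover_count horizontal_cover_count; lia.
Qed.

End Matchings.

Lemma perfect_matching_of m N (h : {ffun 'I_N -> cstate m}) :
  perfect_matching (matching_of h) =
  [forall j : 'I_N, col_matching (incoming h j) (h j).1 (h j).2] &&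
  (incoming h N == set0).
Proof.
rewrite /perfect_matching; apply/andP/andP => [[/forall_inP valid /forallP cover]|].
  split.
    apply/forallP => j; apply/forallP => i; apply/andP; split; last first.
      by have := cover (i, j); rewrite cover_count.
    by apply/implyP => iY; have := valid (true, (i, j)); rewrite inE /=; exact.
  case: N h valid {cover} => [//|k] h valid.
  rewrite -[k.+1]/(val (@ord_max k)).+1 incomingS; apply/eqP/setP => i.
  rewrite in_set0; apply/negP => iX.
  by have := valid (false, (i, ord_max)); rewrite inE /= ltnn => /(_ iX).
move=> [/forallP ok /eqP no_exit]; split; last first.
  apply/forallP => -[i j]; rewrite cover_count.
  by have /forallP/(_ i)/andP[] := ok j.
apply/forall_inP => -[[] [i j]]; rewrite inE /= => iX.
  by have /forallP/(_ i)/andP[/implyP -> //] := ok j.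
rewrite ltnNge; apply/negP => le_Nj.
have last_j : N = j.+1 by have := ltn_ord j; lia.
have : incoming h j.+1 = set0 by rewrite -last_j.
by rewrite incomingS => /setP/(_ i); rewrite iX in_set0.
Qed.

Lemma weight_matching_of m G (h : {ffun 'I_(ncols G) -> cstate m}) :
  (forall i j, hw G i j = 1) ->
  \prod_(e in matching_of h) edge_weight e =
  \prod_(j : 'I_(ncols G)) \prod_(i in (h j).2) vw G i j.
Proof.
move=> hw1; rewrite big_mkcond /=.
pose w b (ij : 'I_m * 'I_(ncols G)) :=
  if (b, ij) \in matching_of h then edge_weight (b, ij) else 1.
rewrite (eq_bigr (fun e => w e.1 e.2)) => [|[] //].
rewrite -pair_bigA /= big_bool /= [X in _ * X]big1 ?mulr1 => [|[i j] _]; last first.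
  by rewrite /w; case: ifP => //= _; rewrite hw1.
rewrite (eq_bigr (fun e => w true (e.1, e.2))) => [|[] //].
rewrite -(pair_bigA _ (fun i j => w true (i, j))) exchange_big /=.
apply: eq_bigr => j _; rewrite [RHS]big_mkcond /=; apply: eq_bigr => i _.
by rewrite /w inE.
Qed.

Lemma Msum_graph_mx m G : (forall i j, hw G i j = 1) ->
  Msum m G = @graph_mx m G set0 set0.
Proof.
move=> hw1; rewrite /graph_mx -sum_states_weight /Msum.
rewrite (reindex _ (onW_bij _ (@matching_of_bij m (ncols G)))) big_mkcond /=.
apply: eq_bigr => h _.
rewrite perfect_matching_of /states_weight /col_weight prodr_indicator.
rewrite weight_matching_of //.
by case: [forall _, _]; case: (incoming h _ == set0); rewrite /= ?mul1r ?mul0r.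
Qed.

Lemma hw_Gmn n i j : hw (Gmn n) i j = 1.
Proof. by rewrite /Gmn; case: ifP. Qed.

Lemma hw_adjoin_Gmn G ns : (forall i j, hw G i j = 1) ->
  forall i j, hw (foldl (fun G n => adjoin G (Gmn n)) G ns) i j = 1.
Proof.
elim: ns G => [|n ns IH] G hw1 //=; apply: IH => i j /=.
by rewrite hw1 hw_Gmn; case: ifP => //; case: ifP.
Qed.

Unset Implicit Arguments.

Theorem mainTheorem3 (m : nat) (n0 : int) (ns : seq int) :
  (1 <= m)%N ->
  Msum m (adjoin_all n0 ns) = Msum m (Gmn (n0 + \sum_(n <- ns) n)).
Proof.
move=> _.
rewrite Msum_graph_mx; last exact/hw_adjoin_Gmn/hw_Gmn.
by rewrite Msum_graph_mx ?graph_mx_adjoin_all //; exact: hw_Gmn.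
Qed.
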